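(* Let $A\in\mathbb{R}^{n\times n}$ be symmetric, let $W_k\in\mathbb{R}^{n\times m}$ satisfy $W_k^TW_k=I_m$, and let $v_{k-1},v_k\in\mathbb{R}^{n\times p}$ and $\alpha_k,\beta_k\in\mathbb{R}^{p\times p}$ be given. Define block vectors $q_{k+j}$, $j\ge1$, by the continuation process \[ \begin{aligned} \tilde q_{k+1}&=Av_k-v_k\alpha_k-v_{k-1}\beta_k^T, & q_{k+1}\beta_{k+1}&=(I_n-P_1)\tilde q_{k+1},\\ \tilde q_{k+2}&=Aq_{k+1}-v_k\beta_{k+1}^T, & q_{k+2}\beta_{k+2}&=(I_n-P_2)\tilde q_{k+2},\\ \tilde q_{k+j}&=Aq_{k+j-1}-q_{k+j-2}\beta_{k+j-1}^T, & q_{k+j}\beta_{k+j}&=(I_n-P_j)\tilde q_{k+j},\quad j\ge3, \end{aligned} \] where $P_1=W_kW_k^T$, $P_2=P_1+q_{k+1}q_{k+1}^T$, $P_j=P_2+q_{k+j-1}q_{k+j-1}^T$ for $j\ge3$, and where, for each $j$, the columns of $q_{k+j}$ form an orthonormal basis of the column space of $(I_n-P_j)\tilde q_{k+j}$ and $\beta_{k+j}$ is the (possibly rectangular) matrix of full row rank with $q_{k+j}\beta_{k+j}=(I_n-P_j)\tilde q_{k+j}$. Then for every $j\ge1$ the set of columns of $W_k,q_{k+1},\ldots,q_{k+j}$ is orthonormal. Moreover, for $j\ge3$, \[ \beta_{k+j}=q_{k+j}^TAq_{k+j-1}. \]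
   Context: In cases of rank deficiency the number of columns of $q_{k+j}$ is reduced accordingly (it equals the rank of $(I_n-P_j)\tilde q_{k+j}$). *)

From mathcomp Require Import all_boot all_algebra.
Set Implicit Arguments. Unset Strict Implicit. Unset Printing Implicit Defensive.
Import GRing.Theory.
Local Open Scope ring_scope.

(* Indexing convention: the block vector q_{k+j} is [q j] (j >= 1), with
   [r j] columns; [r 0] = p is the number of columns of v_{k-1}, v_k.
   [beta j] is beta_{k+j}, of size r j x r (j-1).  [q 0] and [beta 0]
   are unused. *)

Definition projP (R : fieldType) (n m : nat) (r : nat -> nat)
  (W : 'M[R]_(n, m)) (q : forall j, 'M[R]_(n, r j)) (j : nat) : 'M[R]_n :=
  let P1 := W *m W^T in
  let P2 := P1 + q 1%N *m (q 1%N)^T in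
  if (j <= 1)%N then P1 else if j == 2%N then P2
  else P2 + q j.-1 *m (q j.-1)^T.

Definition qtilde (R : fieldType) (n : nat) (r : nat -> nat)
  (A : 'M[R]_n) (vkm1 vk : 'M[R]_(n, r 0%N)) (alpha betak : 'M[R]_(r 0%N))
  (q : forall j, 'M[R]_(n, r j)) (beta : forall j, 'M[R]_(r j, r j.-1))
  (j : nat) : 'M[R]_(n, r j.-1) :=
  match j return 'M[R]_(n, r j.-1) with
  | 0 => 0
  | 1 => A *m vk - vk *m alpha - vkm1 *m betak^T
  | 2 => A *m q 1%N - vk *m (beta 1%N)^T
  | j'.+1 => A *m q j' - q j'.-1 *m (beta j')^T
  end.

(* The columns of W, q_{k+1}, ..., q_{k+j} form an orthonormal set,
   i.e. the Gram matrix of the concatenation [W, q 1, ..., q j] is the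
   identity, written blockwise. *)
Definition cols_orthonormal (R : fieldType) (n m : nat) (r : nat -> nat)
  (W : 'M[R]_(n, m)) (q : forall j, 'M[R]_(n, r j)) (j : nat) : Prop :=
  W^T *m W = 1%:M /\
  (forall i, (1 <= i <= j)%N -> (q i)^T *m q i = 1%:M /\ W^T *m q i = 0) /\
  (forall i l, (1 <= i <= j)%N -> (1 <= l <= j)%N -> i != l ->
     (q i)^T *m q l = 0).

From mathcomp Require Import all_boot all_algebra zify.
Import GRing.Theory.
Local Open Scope ring_scope.

(* P_j is the orthogonal projector onto the blocks W_k, q_{k+1} and q_{k+j-1},
   so by induction on j these blocks annihilate (I - P_j) q~_{k+j}, and hence
   q_{k+j}, whose columns lie in its column space.  An older block q_{k+i},
   2 <= i <= j-2, is orthogonal to the range of P_j, so q_{k+i}^T q_{k+j}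
   vanishes as soon as q_{k+i}^T q~_{k+j}
     = q_{k+i}^T A q_{k+j-1} - q_{k+i}^T q_{k+j-2} beta_{k+j-1}^T
   does.  By the symmetry of A and the three-term relation
   q_{k+l}^T A q_{k+i} = q_{k+l}^T q_{k+i+1} beta_{k+i+1}
   (for q_{k+l} orthogonal to W_k, q_{k+1}, q_{k+i-1}, q_{k+i}), the first term
   equals beta_{k+j-1}^T if i = j-2 and 0 otherwise, exactly as the second.
   The same relation with l = i+1 = j gives the formula for beta_{k+j}. *)

Lemma trmx_mul_eq0 {R : comPzRingType} {a b c : nat}
    {M : 'M[R]_(a, b)} {N : 'M[R]_(a, c)} :
  M^T *m N = 0 -> N^T *m M = 0.
Proof. by move=> MN0; rewrite -[N^T *m M]trmxK trmx_mul trmxK MN0 trmx0. Qed.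

Section BlockLanczosContinuation.

Local Set Implicit Arguments.
Local Unset Strict Implicit.

Variables (R : fieldType) (n m : nat) (r : nat -> nat).
Variables (A : 'M[R]_n) (W : 'M[R]_(n, m)).
Variables (vkm1 vk : 'M[R]_(n, r 0%N)) (alpha betak : 'M[R]_(r 0%N)).
Variables (q : forall j, 'M[R]_(n, r j)) (beta : forall j, 'M[R]_(r j, r j.-1)).

Local Notation P := (projP W q).
Local Notation qt := (qtilde A vkm1 vk alpha betak q beta).
Local Notation residual j := ((1%:M - P j) *m qt j).

Definition proj_index (j : nat) : seq nat :=
  if (j <= 1)%N then [::] else if j == 2%N then [:: 1%N] else [:: 1%N; j.-1].

Lemma mem_proj_index i j :
  (i \in proj_index j) = (1 < j)%N && ((i == 1%N) || (2 < j)%N && (i == j.-1)).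
Proof.
rewrite /proj_index; case: leqP => [_|j_gt1] //=.
by case: eqP => [->|]; rewrite !inE ?orbF //; lia.
Qed.

Lemma uniq_proj_index j : uniq (proj_index j).
Proof.
rewrite /proj_index; case: ifP => // j_gt1.
by case: eqP => //= ?; rewrite inE; lia.
Qed.

Lemma projP_sum j : P j = W *m W^T + \sum_(i <- proj_index j) q i *m (q i)^T.
Proof.
rewrite /projP /proj_index; case: ifP => _; first by rewrite big_nil addr0.
by case: eqP => _; rewrite !big_cons big_nil !addr0 ?addrA.
Qed.

Lemma mulmx_I_projP j s (B : 'M[R]_(s, n)) :
  B *m (1%:M - P j) =
  B - B *m W *m W^T - \sum_(i <- proj_index j) B *m q i *m (q i)^T.
Proof.
rewrite projP_sum mulmxBr mulmx1 mulmxDr mulmx_sumr opprD addrA !mulmxA.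
by under eq_bigr do rewrite mulmxA.
Qed.

Lemma mulmx_I_projP_perp j s (B : 'M[R]_(s, n)) :
  B *m W = 0 -> {in proj_index j, forall i, B *m q i = 0} ->
  B *m (1%:M - P j) = B.
Proof.
move=> BW0 Bq0; rewrite mulmx_I_projP BW0 mul0mx subr0 big1_seq ?subr0 //.
by move=> i /andP[_ /Bq0 ->]; rewrite mul0mx.
Qed.

Lemma proj_index_ortho j i :
  cols_orthonormal W q j.-1 -> i \in proj_index j ->
  W^T *m q i = 0 /\ (q i)^T *m q i = 1%:M.
Proof.
move=> [_ [Oq _]] i_j; apply/and_comm/Oq.
by move: i_j; rewrite mem_proj_index; lia.
Qed.

Lemma trW_I_projP j : cols_orthonormal W q j.-1 -> W^T *m (1%:M - P j) = 0.
Proof.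
move=> Oj; rewrite mulmx_I_projP; have [WTW _] := Oj.
rewrite WTW mul1mx subrr big1_seq ?subr0 // => i /andP[_ i_j].
by have [-> _] := proj_index_ortho Oj i_j; rewrite mul0mx.
Qed.

Lemma trq_I_projP j l :
  cols_orthonormal W q j.-1 -> l \in proj_index j ->
  (q l)^T *m (1%:M - P j) = 0.
Proof.
move=> Oj l_j; have [WTq qTq] := proj_index_ortho Oj l_j.
have [_ [_ Oqq]] := Oj.
rewrite mulmx_I_projP (trmx_mul_eq0 WTq) mul0mx subr0.
rewrite (bigD1_seq l) ?uniq_proj_index //= qTq mul1mx big1_seq ?addr0 ?subrr //.
move=> i /andP[i_neq_l i_j]; rewrite Oqq ?mul0mx // 1?eq_sym //.
  by move: l_j; rewrite mem_proj_index; lia.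
by move: i_j; rewrite mem_proj_index; lia.
Qed.

Lemma qtilde_ge3 j : (3 <= j)%N -> qt j = A *m q j.-1 - q j.-2 *m (beta j.-1)^T.
Proof. by case: j => [|[|[|j]]]. Qed.

Hypothesis q_row_space : forall j, (1 <= j)%N -> ((q j)^T <= (residual j)^T)%MS.
Hypothesis q_beta : forall j, (1 <= j)%N -> q j *m beta j = residual j.

Lemma mulmx_q_eq0 j s (B : 'M[R]_(s, n)) :
  (1 <= j)%N -> B *m residual j = 0 -> B *m q j = 0.
Proof.
move=> /q_row_space /submxP [D qTD] BX0.
by rewrite -[q j]trmxK qTD trmx_mul trmxK mulmxA BX0 mul0mx.
Qed.

Lemma lanczos_relation j s (B : 'M[R]_(s, n)) : (3 <= j)%N ->
  B *m W = 0 -> B *m q 1 = 0 -> B *m q j.-1 = 0 -> B *m q j.-2 = 0 ->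
  B *m A *m q j.-1 = B *m q j *m beta j.
Proof.
move=> j_ge3 BW0 Bq1 Bqj1 Bqj2.
rewrite -[RHS]mulmxA q_beta; last by lia.
rewrite mulmxA mulmx_I_projP_perp //; last first.
  by move=> i; rewrite mem_proj_index => /andP[_ /orP[|/andP[_]] /eqP->].
by rewrite qtilde_ge3 // mulmxBr mulmxA [B *m (_ *m _)]mulmxA Bqj2 mul0mx subr0.
Qed.

Lemma trq_A_q j i : cols_orthonormal W q j -> (2 <= i < j)%N ->
  (q j)^T *m A *m q i = (q j)^T *m q i.+1 *m beta i.+1.
Proof.
move=> [_ [Oq Oqq]] i_range.
have qjq l : (1 <= l < j)%N -> (q j)^T *m q l = 0.
  by move=> l_lt_j; apply: Oqq; lia.
apply: (@lanczos_relation i.+1); rewrite ?qjq //; try lia.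
by apply: trmx_mul_eq0; have [|] := Oq j; first lia.
Qed.

Hypothesis A_sym : A^T = A.
Hypothesis qTq : forall j, (1 <= j)%N -> (q j)^T *m q j = 1%:M.

Lemma trW_q_next j : cols_orthonormal W q j -> W^T *m q j.+1 = 0.
Proof.
by move=> Oj; apply: mulmx_q_eq0; rewrite // mulmxA trW_I_projP ?mul0mx.
Qed.

Lemma trq_q_next j i :
  cols_orthonormal W q j -> (1 <= i <= j)%N -> (q i)^T *m q j.+1 = 0.
Proof.
move=> Oj i_le_j; apply: mulmx_q_eq0 => //.
have [i_proj | ] := boolP (i \in proj_index j.+1).
  by rewrite mulmxA trq_I_projP ?mul0mx.
rewrite mem_proj_index => i_old; have [_ [Oq Oqq]] := Oj.
have qiW : (q i)^T *m W = 0 by apply: trmx_mul_eq0; have [] := Oq i i_le_j.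
rewrite mulmxA mulmx_I_projP_perp //; last first.
  by move=> l; rewrite mem_proj_index => l_j; apply: Oqq; lia.
have sym : (q i)^T *m A *m q j = (beta i.+1)^T *m ((q i.+1)^T *m q j).
  by apply: trmx_inj; rewrite !trmx_mul !trmxK A_sym mulmxA trq_A_q //; lia.
rewrite qtilde_ge3 /=; last by lia.
rewrite mulmxBr mulmxA sym [(q i)^T *m _]mulmxA.
have [i1_lt_j | j_lt_i1 | <-] := ltngtP i.+1 j.
- by rewrite (Oqq i.+1 j) ?(Oqq i j.-1) ?mulmx0 ?mul0mx ?subrr //; lia.
- by lia.
- by rewrite qTq // mulmx1 qTq ?mul1mx ?subrr //; lia.
Qed.

Lemma cols_orthonormal_next j :
  cols_orthonormal W q j -> cols_orthonormal W q j.+1.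
Proof.
move=> Oj; have [WTW [Oq Oqq]] := Oj.
split=> //; split=> [i | i l].
  have [-> _ | i_ne i_range] := eqVneq i j.+1.
    by split; [exact: qTq | exact: trW_q_next].
  by apply: Oq; lia.
have [-> | i_ne] := eqVneq i j.+1; have [-> | l_ne] := eqVneq l j.+1;
  move=> i_range l_range i_neq_l.
- by [].
- by apply/trmx_mul_eq0/(trq_q_next Oj); lia.
- by apply: (trq_q_next Oj); lia.
- by apply: Oqq; lia.
Qed.

Lemma cols_orthonormal_all :
  W^T *m W = 1%:M -> forall j, cols_orthonormal W q j.
Proof.
move=> WTW; elim=> [|j /cols_orthonormal_next //].
by split=> //; split=> [i | i l] /andP[i_gt0 /(leq_trans i_gt0)].
Qed.

Lemma beta_lanczos j :
  (3 <= j)%N -> cols_orthonormal W q j -> beta j = (q j)^T *m A *m q j.-1.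
Proof.
case: j => // j j_ge3 Oj.
by rewrite (@trq_A_q j.+1 j) ?qTq ?mul1mx //; lia.
Qed.

End BlockLanczosContinuation.

Theorem theorem3 (R : realFieldType) (n m : nat) (r : nat -> nat)
  (A : 'M[R]_n) (W : 'M[R]_(n, m))
  (vkm1 vk : 'M[R]_(n, r 0%N)) (alpha betak : 'M[R]_(r 0%N))
  (q : forall j, 'M[R]_(n, r j)) (beta : forall j, 'M[R]_(r j, r j.-1)) :
  A^T = A ->
  W^T *m W = 1%:M ->
  (forall j, (1 <= j)%N ->
     let X := (1%:M - projP W q j) *m qtilde A vkm1 vk alpha betak q beta j in
     [/\ (q j)^T *m q j = 1%:M,
         ((q j)^T == X^T)%MS,
         q j *m beta j = X
       & row_free (beta j)]) ->
  (forall j, (1 <= j)%N -> cols_orthonormal W q j) /\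
  (forall j, (3 <= j)%N -> beta j = (q j)^T *m A *m q j.-1).
Proof.
move=> A_sym WTW spec.
set X := fun j => (1%:M - projP W q j) *m qtilde A vkm1 vk alpha betak q beta j.
have q_row_space j : (1 <= j)%N -> ((q j)^T <= (X j)^T)%MS.
  by move=> /spec[_ /andP[]].
have q_beta j : (1 <= j)%N -> q j *m beta j = X j by case/spec.
have qTq j : (1 <= j)%N -> (q j)^T *m q j = 1%:M by case/spec.
have ortho := cols_orthonormal_all q_row_space q_beta A_sym qTq WTW.
split=> [j _ | j j_ge3]; first exact: ortho.
exact: (beta_lanczos q_beta qTq j_ge3 (ortho j)).
Qed.
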